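(* Let $\mathsf{L}_1,\mathsf{L}_2$ be finite connected undirected graphs (possibly with tails), where $\mathsf{L}_j$ has $t_j\in\{1,2\}$ marked (ramified) vertices. Let $1\le g\le \min(t_1,t_2)$ and let $\mathsf{L}$ be a $g$-gluing of $\mathsf{L}_1$ and $\mathsf{L}_2$, and assume that $\mathsf{L}$ has $t=t_1+t_2-g$ marked vertices with $1\le t\le 2$. Then $F_t(\mathsf{L})=F_{t_1}(\mathsf{L}_1)F_{t_2}(\mathsf{L}_2)$.
   Context: Denote the marked vertices of $\mathsf{L}_j$ by $v_i(\mathsf{L}_j)$, $1\le i\le t_j$. A $g$-gluing $\mathsf{L}$ of $\mathsf{L}_1$ and $\mathsf{L}_2$ is the graph with edge set $E(\mathsf{L}_1)\sqcup E(\mathsf{L}_2)$ and vertex set $\mathbf{V}(\mathsf{L}_1)\sqcup\mathbf{V}(\mathsf{L}_2)$ modulo the identification $v_1(\mathsf{L}_1)=v_1(\mathsf{L}_2)$ if $g=1$, and modulo $v_i(\mathsf{L}_1)=v_i(\mathsf{L}_2)$ for $i=1,2$ if $g=2$; the marked vertices of $\mathsf{L}$ are the images of the marked vertices of $\mathsf{L}_1,\mathsf{L}_2$. For a finite connected graph $\mathsf{S}$ with $t\in\{1,2\}$ marked vertices, a segmental $t$-tree spanning forest is a decomposition of $\mathsf{S}$ into $t$ trees (a spanning forest with $t$ components) each containing exactly one marked vertex; $F_t(\mathsf{S})$ denotes their number. In particular $F_1(\mathsf{S})$ is the number of spanning trees of $\mathsf{S}$. *)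

(* Finite multigraphs: vertex finType V, edge finType E,
   endpoint map ends : E -> V * V (loops and multiple edges allowed). *)
From mathcomp Require Import all_boot.
Set Implicit Arguments. Unset Strict Implicit. Unset Printing Implicit Defensive.

Section Graphs.
Variables (V E : finType) (ends : E -> V * V).

Definition adj_in (F : {set E}) : rel V :=
  fun x y => [exists e in F, (ends e == (x, y)) || (ends e == (y, x))].

Definition conn_in (F : {set E}) (x y : V) : bool := connect (adj_in F) x y.

Definition graph_connected : Prop := forall x y : V, conn_in [set: E] x y.

(* F is acyclic (a forest): no edge of F lies on a cycle of (V, F), i.e. the
   endpoints of each e in F are not connected in F \ {e} (this also excludes loops). *)
Definition is_forest (F : {set E}) : bool :=
  [forall e in F, ~~ conn_in (F :\ e) (ends e).1 (ends e).2].

Definition seg_forest (t : nat) (m : nat -> V) (F : {set E}) : bool :=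
  [&& is_forest F,
      [forall v : V, [exists i : 'I_t, conn_in F v (m i)]] &
      [forall i : 'I_t, forall j : 'I_t, conn_in F (m i) (m j) ==> (i == j)]].

Definition nF (t : nat) (m : nat -> V) : nat := #|[set F : {set E} | seg_forest t m F]|.

End Graphs.

Section Gluing.
Variables (V1 E1 V2 E2 : finType) (ends1 : E1 -> V1 * V1) (ends2 : E2 -> V2 * V2).
Variables (t1 t2 g : nat) (m1 : nat -> V1) (m2 : nat -> V2).

Definition keep2 (v : V2) : bool := [forall i : 'I_g, m2 i != v].

(* vertex set of the gluing: V1 together with the non-identified vertices of V2
   (a concrete model of (V1 ⊔ V2) / (m1 i = m2 i, i < g)) *)
Definition glueV : finType := (V1 + {v : V2 | keep2 v})%type.

Definition glue1 (v : V1) : glueV := inl v.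

Definition glue2 (v : V2) : glueV :=
  match insub v with
  | Some w => inr w
  | None => inl (m1 (oapp (@nat_of_ord g) 0 [pick i : 'I_g | m2 i == v]))
  end.

Definition glueE : finType := (E1 + E2)%type.

Definition glue_ends (e : glueE) : glueV * glueV :=
  match e with
  | inl e1 => (glue1 (ends1 e1).1, glue1 (ends1 e1).2)
  | inr e2 => (glue2 (ends2 e2).1, glue2 (ends2 e2).2)
  end.

(* marked vertices of the gluing: images of m1 0..m1 (t1-1), then images of
   the non-identified marked vertices m2 g .. m2 (t2-1) *)
Definition glue_marks (i : nat) : glueV :=
  if i < t1 then glue1 (m1 i) else glue2 (m2 (i - t1 + g)).

End Gluing.

From mathcomp Require Import all_boot zify.
Set Implicit Arguments. Unset Strict Implicit. Unset Printing Implicit Defensive.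

(* An edge set F of the gluing L is the disjoint union of its parts F1 in L1
   and F2 in L2, and F |-> (F1, F2) is a bijection, so it suffices that F is a
   segmental forest of L iff F1 and F2 are segmental forests of L1 and L2.
   Under either side of this equivalence the glued marks lie in distinct
   components. Collapsing each component of the other side onto the glued mark
   it contains then gives retractions L -> L1 and L -> L2 that map F-paths to
   F1- and F2-paths; with the inclusions L1, L2 -> L this shows that
   F-connectivity between vertices of one side is Fi-connectivity, and
   acyclicity, covering and separation of the marks transfer both ways. *)

Section SpanningSubgraphs.
Variables (V E : finType) (ends : E -> V * V).
Implicit Types (F : {set E}) (m : nat -> V).

Lemma adj_in_sym F : symmetric (adj_in ends F).
Proof.
by move=> x y; apply/existsP/existsP => -[e /andP[eF exy]]; exists e; rewrite eF orbC.
Qed.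

Lemma conn_in_refl F x : conn_in ends F x x.
Proof. exact: connect0. Qed.

Lemma conn_in_sym F x y : conn_in ends F x y = conn_in ends F y x.
Proof. exact/sym_connect_sym/adj_in_sym. Qed.

Lemma conn_in_same F x y z :
  conn_in ends F x y -> conn_in ends F x z = conn_in ends F y z.
Proof. by move=> xy; apply: (same_connect (sym_connect_sym (adj_in_sym F)) xy). Qed.

Lemma conn_in_edge F e : e \in F -> conn_in ends F (ends e).1 (ends e).2.
Proof.
move=> eF; apply/connect1/existsP; exists e.
by rewrite eF; case: (ends e) => /= x y; rewrite eqxx.
Qed.

Definition marks_cover t m F : Prop :=
  forall v, exists2 i, i < t & conn_in ends F v (m i).

Definition marks_separated t m F : Prop :=
  forall i j, i < t -> j < t -> conn_in ends F (m i) (m j) -> i = j.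

Lemma seg_forestP t m F :
  reflect [/\ is_forest ends F, marks_cover t m F & marks_separated t m F]
          (seg_forest ends t m F).
Proof.
apply: (iffP and3P) => -[forF covF sepF]; split=> //.
- by move=> v; have /existsP[i vi] := forallP covF v; exists i.
- move=> i j it jt ij; have := forallP (forallP sepF (Ordinal it)) (Ordinal jt).
  by rewrite ij => /eqP[].
- by apply/forallP => v; have [i it vi] := covF v; apply/existsP; exists (Ordinal it).
- apply/forallP => i; apply/forallP => j; apply/implyP => /sepF sep_ij.
  exact/eqP/val_inj/sep_ij.
Qed.

Lemma marks_separated_le s t m F :
  s <= t -> marks_separated t m F -> marks_separated s m F.
Proof. by move=> st sepF i j i_s j_s; apply: sepF; apply: leq_trans st. Qed.

(* For g <= 2: the i < g such that v lies in the F-component of m i, provided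
   there is one (otherwise a junk value). *)
Definition mark_side g m F v : nat := (g == 2) && ~~ conn_in ends F v (m 0).

Lemma mark_side_lt g m F v : 0 < g -> mark_side g m F v < g.
Proof. by rewrite /mark_side; case: eqP => [->|] //=; case: (~~ _). Qed.

Lemma mark_side_conn g m F x y :
  conn_in ends F x y -> mark_side g m F x = mark_side g m F y.
Proof. by rewrite /mark_side => /conn_in_same ->. Qed.

Lemma mark_side_mark g m F i :
  g <= 2 -> marks_separated g m F -> i < g -> mark_side g m F (m i) = i.
Proof.
rewrite /mark_side => g_le2 sepF ig; case: eqP => [g2 | /eqP g_ne2] /=; last by lia.
have [->|->] : i = 0 \/ i = 1 by lia.
  by rewrite conn_in_refl.
by apply/eqP; rewrite eqb1; apply/negP => /sepF; rewrite g2 => /(_ isT isT).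
Qed.

End SpanningSubgraphs.

Lemma conn_in_hom (V E V' E' : finType) (ends : E -> V * V) (ends' : E' -> V' * V')
    (F : {set E}) (F' : {set E'}) (h : V -> V') :
  (forall e, e \in F -> conn_in ends' F' (h (ends e).1) (h (ends e).2)) ->
  forall x y, conn_in ends F x y -> conn_in ends' F' (h x) (h y).
Proof.
move=> hF x _ /connectP[p xp ->].
elim: p x xp => [|y p IHp] x /=; first by rewrite conn_in_refl.
rewrite {1}/adj_in => /andP[/existsP[e /andP[eF exy]] /IHp]; apply: connect_trans.
by case/orP: exy => /eqP ends_e; have := hF e eF; rewrite ends_e // conn_in_sym.
Qed.

Section SumSets.
Variables A B : finType.
Implicit Types (F : {set A + B}) (X : {set A}) (Y : {set B}).

Definition inl_part F : {set A} := [set a | inl a \in F].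
Definition inr_part F : {set B} := [set b | inr b \in F].
Definition sum_set X Y : {set A + B} :=
  [set e | match e with inl a => a \in X | inr b => b \in Y end].

Lemma inl_partD1l F a : inl_part (F :\ inl a) = inl_part F :\ a.
Proof. by apply/setP => x; rewrite !inE. Qed.

Lemma inr_partD1l F a : inr_part (F :\ inl a) = inr_part F.
Proof. by apply/setP => x; rewrite !inE. Qed.

Lemma inl_partD1r F b : inl_part (F :\ inr b) = inl_part F.
Proof. by apply/setP => x; rewrite !inE. Qed.

Lemma inr_partD1r F b : inr_part (F :\ inr b) = inr_part F :\ b.
Proof. by apply/setP => x; rewrite !inE. Qed.

Lemma card_sum_parts (XX : {set {set A}}) (YY : {set {set B}}) :
  #|[set F | (inl_part F \in XX) && (inr_part F \in YY)]| = #|XX| * #|YY|.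
Proof.
pose parts F := (inl_part F, inr_part F).
pose join (XY : {set A} * {set B}) := sum_set XY.1 XY.2.
have partsK : cancel parts join by move=> F; apply/setP => -[a|b]; rewrite !inE.
have joinK : cancel join parts.
  by move=> [X Y]; congr pair; apply/setP => x; rewrite !inE.
rewrite -cardsX -(card_imset _ (can_inj joinK)) (can2_imset_pre _ joinK partsK).
by apply: eq_card => F; rewrite !inE.
Qed.

End SumSets.

Section Gluing.
Variables (V1 E1 V2 E2 : finType) (ends1 : E1 -> V1 * V1) (ends2 : E2 -> V2 * V2).
Variables (g : nat) (m1 : nat -> V1) (m2 : nat -> V2).

Local Notation VL := (glueV V1 g m2).
Local Notation endsL := (glue_ends ends1 ends2 g m1 m2).
Local Notation gl1 := (glue1 g m2).
Local Notation gl2 := (glue2 g m1 m2).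

Variant glue2_spec (v : V2) : VL -> Prop :=
  | Glue2Mark i of i < g & v = m2 i : glue2_spec v (gl1 (m1 i))
  | Glue2Kept w of val w = v : glue2_spec v (inr w).

Lemma glue2P v : glue2_spec v (gl2 v).
Proof.
rewrite /glue2; case: insubP => [w _ <-|]; first exact: Glue2Kept.
move=> /forallPn[i /negPn/eqP m2i]; case: pickP => [j /eqP m2j | /(_ i)] /=.
  exact: Glue2Mark.
by rewrite m2i eqxx.
Qed.

Lemma glue2_mark i :
  (forall i j, i < g -> j < g -> m2 i = m2 j -> i = j) ->
  i < g -> gl2 (m2 i) = gl1 (m1 i).
Proof.
move=> inj_m2 ig; case: glue2P => [j jg /inj_m2 -> // | w w_m2i].
by have /forallP/(_ (Ordinal ig)) := valP w; rewrite w_m2i eqxx.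
Qed.

Lemma glue2_val (w : {v : V2 | keep2 g m2 v}) : gl2 (val w) = inr w.
Proof. by rewrite /glue2 valK. Qed.

Hypothesis g_le2 : g <= 2.

Section Retractions.
Variable F : {set glueE E1 E2}.
Local Notation F1 := (inl_part F).
Local Notation F2 := (inr_part F).
Local Notation side1 := (mark_side ends1 g m1 F1).
Local Notation side2 := (mark_side ends2 g m2 F2).

Definition retract1 (u : VL) : V1 :=
  match u with inl v => v | inr w => m1 (side2 (val w)) end.

Definition retract2 (u : VL) : V2 :=
  match u with inl v => m2 (side1 v) | inr w => val w end.

Lemma retract1_glue2 a :
  marks_separated ends2 g m2 F2 -> retract1 (gl2 a) = m1 (side2 a).
Proof. by move=> sep2; case: glue2P => [i ig -> | w <-] //=; rewrite mark_side_mark. Qed.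

Lemma retract2_glue2 a : marks_separated ends1 g m1 F1 -> retract2 (gl2 a) = a.
Proof. by move=> sep1; case: glue2P => [i ig -> | w <-] //=; rewrite mark_side_mark. Qed.

Lemma conn_glue1 x y : conn_in ends1 F1 x y -> conn_in endsL F (gl1 x) (gl1 y).
Proof. by apply: conn_in_hom => a; rewrite inE => /(conn_in_edge endsL). Qed.

Lemma conn_glue2 x y : conn_in ends2 F2 x y -> conn_in endsL F (gl2 x) (gl2 y).
Proof. by apply: conn_in_hom => b; rewrite inE => /(conn_in_edge endsL). Qed.

Lemma conn_retract1 u v : marks_separated ends2 g m2 F2 ->
  conn_in endsL F u v -> conn_in ends1 F1 (retract1 u) (retract1 v).
Proof.
move=> sep2; apply: conn_in_hom => -[a|b] eF /=; first by apply: conn_in_edge; rewrite inE.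
have b_F2 : conn_in ends2 F2 (ends2 b).1 (ends2 b).2 by apply: conn_in_edge; rewrite inE.
by rewrite !retract1_glue2 // (mark_side_conn _ _ b_F2) conn_in_refl.
Qed.

Lemma conn_retract2 u v : marks_separated ends1 g m1 F1 ->
  conn_in endsL F u v -> conn_in ends2 F2 (retract2 u) (retract2 v).
Proof.
move=> sep1; apply: conn_in_hom => -[a|b] eF /=; last first.
  by rewrite !retract2_glue2 //; apply: conn_in_edge; rewrite inE.
have a_F1 : conn_in ends1 F1 (ends1 a).1 (ends1 a).2 by apply: conn_in_edge; rewrite inE.
by rewrite (mark_side_conn _ _ a_F1) conn_in_refl.
Qed.

Lemma conn_glue1E x y : marks_separated ends2 g m2 F2 ->
  conn_in endsL F (gl1 x) (gl1 y) = conn_in ends1 F1 x y.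
Proof. by move=> sep2; apply/idP/idP => [/(conn_retract1 sep2) | /conn_glue1]. Qed.

Lemma conn_glue2E x y : marks_separated ends1 g m1 F1 ->
  conn_in endsL F (gl2 x) (gl2 y) = conn_in ends2 F2 x y.
Proof.
move=> sep1; apply/idP/idP => [/(conn_retract2 sep1) | /conn_glue2] //.
by rewrite !retract2_glue2.
Qed.

End Retractions.

Lemma is_forest_glue F :
  marks_separated ends1 g m1 (inl_part F) -> marks_separated ends2 g m2 (inr_part F) ->
  is_forest endsL F = is_forest ends1 (inl_part F) && is_forest ends2 (inr_part F).
Proof.
move=> sep1 sep2; apply/forall_inP/andP => [forF | [/forall_inP for1 /forall_inP for2]].
  split; apply/forall_inP.
    move=> a; rewrite inE => /forF /=.
    by rewrite conn_glue1E ?inr_partD1l // inl_partD1l.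
  move=> b; rewrite inE => /forF /=.
  by rewrite conn_glue2E ?inl_partD1r // inr_partD1r.
case=> [a|b] eF /=.
  by rewrite conn_glue1E ?inr_partD1l // inl_partD1l; apply: for1; rewrite inE.
by rewrite conn_glue2E ?inl_partD1r // inr_partD1r; apply: for2; rewrite inE.
Qed.

Section GluedMarks.
Variables t1 t2 : nat.
Hypotheses (g_gt0 : 0 < g) (g_le_t1 : g <= t1) (g_le_t2 : g <= t2).
Hypothesis inj_m2 : forall i j, i < g -> j < g -> m2 i = m2 j -> i = j.

Local Notation t := (t1 + t2 - g).
Local Notation M := (glue_marks t1 g m1 m2).

Lemma glue_marks_lt k : k < t1 -> M k = gl1 (m1 k).
Proof. by rewrite /glue_marks => ->. Qed.

Lemma glue_marks_ge k : t1 <= k -> M k = gl2 (m2 (k - t1 + g)).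
Proof. by rewrite /glue_marks ltnNge => ->. Qed.

Definition glue_index j := if j < g then j else j + t1 - g.

Lemma glue_marks_index j : M (glue_index j) = gl2 (m2 j).
Proof.
rewrite /glue_index; case: (ltnP j g) => jg.
  by rewrite glue_marks_lt ?glue2_mark //; apply: leq_trans g_le_t1.
by rewrite glue_marks_ge; [congr (gl2 (m2 _)) | ]; lia.
Qed.

Lemma glue_index_lt j : j < t2 -> glue_index j < t.
Proof. by move=> jt; rewrite /glue_index; case: (ltnP j g) => ?; lia. Qed.

Lemma glue_index_inj : injective glue_index.
Proof.
by move=> i j; rewrite /glue_index; case: (ltnP i g) => ?; case: (ltnP j g) => ?; lia.
Qed.

Variable F : {set glueE E1 E2}.
Local Notation F1 := (inl_part F).
Local Notation F2 := (inr_part F).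

Lemma retract1_glue_marks k : marks_separated ends2 g m2 F2 ->
  k < t -> exists2 i, i < t1 & retract1 F (M k) = m1 i.
Proof.
move=> sep2 kt; have [k_lt|k_ge] := ltnP k t1; first by exists k; rewrite ?glue_marks_lt.
rewrite glue_marks_ge // retract1_glue2 //; eexists; last by [].
by apply: leq_trans g_le_t1; apply: mark_side_lt.
Qed.

Lemma retract2_glue_marks k : marks_separated ends1 g m1 F1 ->
  retract2 F (M k) = m2 (if k < t1 then mark_side ends1 g m1 F1 (m1 k) else k - t1 + g).
Proof.
move=> sep1; case: (ltnP k t1) => k_t1; first by rewrite glue_marks_lt.
by rewrite glue_marks_ge // retract2_glue2.
Qed.

Lemma marks_separated_glue_inl :
  marks_separated endsL t M F -> marks_separated ends1 t1 m1 F1.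
Proof.
move=> sepF i j it jt /conn_glue1; rewrite -!glue_marks_lt //.
by apply: sepF; lia.
Qed.

Lemma marks_separated_glue_inr :
  marks_separated endsL t M F -> marks_separated ends2 t2 m2 F2.
Proof.
move=> sepF i j it jt /conn_glue2; rewrite -!glue_marks_index.
by move/sepF => /(_ (glue_index_lt it) (glue_index_lt jt)) /glue_index_inj.
Qed.

Lemma marks_separated_glue :
  marks_separated ends1 t1 m1 F1 -> marks_separated ends2 t2 m2 F2 ->
  marks_separated endsL t M F.
Proof.
move=> sep1 sep2; have sep1g := marks_separated_le g_le_t1 sep1.
have sep2g := marks_separated_le g_le_t2 sep2.
move=> i j it jt; have [/andP[i_t1 j_t1] | ij_ge] := boolP ((i < t1) && (j < t1)).
  by rewrite !glue_marks_lt // conn_glue1E //; apply: sep1.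
(* Otherwise retract onto L2: a mark m1 k retracts to a glued mark m2 s with
   s < g, whereas M k = m2 (k - t1 + g) for k >= t1 is not glued. *)
move/(conn_retract2 sep1g); rewrite !retract2_glue_marks // => /sep2.
have := mark_side_lt ends1 m1 F1 (m1 i) g_gt0; have := mark_side_lt ends1 m1 F1 (m1 j) g_gt0.
by move: ij_ge; case: (ltnP i t1); case: (ltnP j t1) => //= *; lia.
Qed.

Lemma marks_cover_glue :
  marks_cover ends1 t1 m1 F1 -> marks_cover ends2 t2 m2 F2 -> marks_cover endsL t M F.
Proof.
move=> cov1 cov2 [v|w].
  have [i it vi] := cov1 v; exists i; first lia.
  by rewrite glue_marks_lt //; apply: conn_glue1.
have [j jt wj] := cov2 (val w); exists (glue_index j); first exact: glue_index_lt.
by rewrite glue_marks_index -glue2_val; apply: conn_glue2.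
Qed.

Lemma marks_cover_glue_inl : marks_separated ends2 g m2 F2 ->
  marks_cover endsL t M F -> marks_cover ends1 t1 m1 F1.
Proof.
move=> sep2 covF v; have [k kt /(conn_retract1 sep2) vk] := covF (gl1 v).
by have [i it ki] := retract1_glue_marks sep2 kt; exists i; rewrite -?ki.
Qed.

Lemma marks_cover_glue_inr : marks_separated ends1 g m1 F1 ->
  marks_cover endsL t M F -> marks_cover ends2 t2 m2 F2.
Proof.
move=> sep1 covF v; have [k kt] := covF (gl2 v).
move/(conn_retract2 sep1); rewrite retract2_glue2 // retract2_glue_marks // => vk.
eexists; last exact: vk.
have := mark_side_lt ends1 m1 F1 (m1 k) g_gt0; case: (ltnP k t1) => /= *; lia.
Qed.

Lemma seg_forest_glue :
  seg_forest endsL t M F = seg_forest ends1 t1 m1 F1 && seg_forest ends2 t2 m2 F2.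
Proof.
apply/seg_forestP/andP => [[forF covF sepF] | ].
  have sep1 := marks_separated_glue_inl sepF; have sep2 := marks_separated_glue_inr sepF.
  have sep1g := marks_separated_le g_le_t1 sep1.
  have sep2g := marks_separated_le g_le_t2 sep2.
  move: forF; rewrite is_forest_glue // => /andP[for1 for2].
  split; apply/seg_forestP; split=> //.
    exact: marks_cover_glue_inl.
  exact: marks_cover_glue_inr.
case=> /seg_forestP[for1 cov1 sep1] /seg_forestP[for2 cov2 sep2].
have sep1g := marks_separated_le g_le_t1 sep1; have sep2g := marks_separated_le g_le_t2 sep2.
split; last exact: marks_separated_glue.
  by rewrite is_forest_glue ?for1 ?for2.
exact: marks_cover_glue.
Qed.

End GluedMarks.

End Gluing.

Theorem proposition5p5
  (V1 E1 V2 E2 : finType) (ends1 : E1 -> V1 * V1) (ends2 : E2 -> V2 * V2)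
  (t1 t2 g : nat) (m1 : nat -> V1) (m2 : nat -> V2) :
  1 <= t1 <= 2 -> 1 <= t2 <= 2 ->
  1 <= g <= minn t1 t2 ->
  1 <= t1 + t2 - g <= 2 ->
  (forall i j, i < t1 -> j < t1 -> m1 i = m1 j -> i = j) ->
  (forall i j, i < t2 -> j < t2 -> m2 i = m2 j -> i = j) ->
  graph_connected ends1 -> graph_connected ends2 ->
  nF (glue_ends ends1 ends2 g m1 m2) (t1 + t2 - g) (glue_marks t1 g m1 m2)
  = nF ends1 t1 m1 * nF ends2 t2 m2.
Proof.
move=> ht1 ht2 hg _ _ inj_m2 _ _.
have inj_m2g i j : i < g -> j < g -> m2 i = m2 j -> i = j.
  by move=> ig jg; apply: inj_m2; lia.
rewrite /nF -card_sum_parts; apply: eq_card => F; rewrite !inE.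
by apply: (seg_forest_glue ends1 ends2 m1 _ _ _ _ inj_m2g); lia.
Qed.
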